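(* Let $B$ be a Horn program, $E^+,E^-$ finite sets of ground atoms, and $H_1,H_2,H_3\in\mathcal{H}_{D,C}$ hypotheses with $H_3$ a generalization of $H_1$. If $S_{ACC}(H_2,B,E^+,E^-) - S_{ACC}(H_1,B,E^+,E^-) > fn(H_1,B,E^+)$, then $S_{ACC}(H_2,B,E^+,E^-) > S_{ACC}(H_3,B,E^+,E^-)$.
   Context: A definite clause is a clause with exactly one positive literal. A hypothesis is a finite set of definite clauses; $\mathcal{H}_{D,C}$ denotes the hypothesis space of hypotheses consistent with a declaration bias $D$ and hypothesis constraints $C$ (only membership matters). $B$ is background knowledge, $E^+$ positive and $E^-$ negative examples. For a hypothesis $H$: $tp(H,B,E^+)=|\{e\in E^+ : H\cup B\models e\}|$, $tn(H,B,E^-)=|\{e\in E^- : H\cup B\not\models e\}|$, $fn(H,B,E^+)=|E^+|-tp(H,B,E^+)$, $fp(H,B,E^-)=|E^-|-tn(H,B,E^-)$, and $S_{ACC}(H,B,E^+,E^-)=tp(H,B,E^+)+tn(H,B,E^-)$. A clause $C_1$ subsumes a clause $C_2$ iff there is a substitution $\theta$ with $C_1\theta\subseteq C_2$. A clausal theory $T_1$ subsumes $T_2$ ($T_1\preceq T_2$) iff every clause of $T_2$ is subsumed by some clause of $T_1$. $T_1$ is a generalization of $T_2$ iff $T_1\preceq T_2$, and a specialization of $T_2$ iff $T_2\preceq T_1$. *)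

From Stdlib Require Import List ZArith Classical ClassicalEpsilon.
Import ListNotations.
Set Implicit Arguments.

Section Syntax.
Variables (F P : Type). (* function symbols (constants = 0-ary) and predicate symbols *)

Inductive term : Type :=
| Var : nat -> term
| Fn : F -> list term -> term.

Record atom : Type := Atom { apred : P; aargs : list term }.

Inductive literal : Type :=
| Pos : atom -> literal
| Neg : atom -> literal.

(* a clause is a (finite) set of literals, represented by a list *)
Definition clause := list literal.

Definition is_pos (l : literal) : bool :=
  match l with Pos _ => true | Neg _ => false end.

Definition definite_clause (c : clause) : Prop := length (filter is_pos c) = 1.
Definition horn_clause (c : clause) : Prop := length (filter is_pos c) <= 1.

Definition hypothesis (H : list clause) : Prop := Forall definite_clause H.
Definition horn_program (B : list clause) : Prop := Forall horn_clause B.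

Fixpoint tvars (t : term) : list nat :=
  match t with Var v => [v] | Fn _ ts => flat_map tvars ts end.
Definition ground_atom (a : atom) : Prop := flat_map tvars (aargs a) = [].

Fixpoint tsubst (s : nat -> term) (t : term) : term :=
  match t with Var v => s v | Fn f ts => Fn f (map (tsubst s) ts) end.
Definition asubst (s : nat -> term) (a : atom) : atom :=
  Atom (apred a) (map (tsubst s) (aargs a)).
Definition lsubst (s : nat -> term) (l : literal) : literal :=
  match l with Pos a => Pos (asubst s a) | Neg a => Neg (asubst s a) end.

Definition subsumes (c1 c2 : clause) : Prop :=
  exists s : nat -> term, forall l, In l c1 -> In (lsubst s l) c2.

Definition theory_subsumes (T1 T2 : list clause) : Prop :=
  forall c2, In c2 T2 -> exists c1, In c1 T1 /\ subsumes c1 c2.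

Definition generalization (T1 T2 : list clause) : Prop := theory_subsumes T1 T2.
Definition specialization (T1 T2 : list clause) : Prop := theory_subsumes T2 T1.

Record interp : Type := Interp {
  dom : Type;
  dom_inh : dom;
  fun_i : F -> list dom -> dom;
  pred_i : P -> list dom -> Prop }.

Fixpoint teval (I : interp) (g : nat -> dom I) (t : term) : dom I :=
  match t with Var v => g v | Fn f ts => fun_i I f (map (teval I g) ts) end.

Definition atom_true (I : interp) (g : nat -> dom I) (a : atom) : Prop :=
  pred_i I (apred a) (map (teval I g) (aargs a)).

Definition lit_true (I : interp) (g : nat -> dom I) (l : literal) : Prop :=
  match l with Pos a => atom_true I g a | Neg a => ~ atom_true I g a end.

Definition clause_valid (I : interp) (c : clause) : Prop :=
  forall g : nat -> dom I, exists l, In l c /\ lit_true I g l.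

Definition is_model (I : interp) (T : list clause) : Prop :=
  forall c, In c T -> clause_valid I c.

Definition entails (T : list clause) (a : atom) : Prop :=
  forall I : interp, is_model I T -> forall g : nat -> dom I, atom_true I g a.

Definition count_prop {A : Type} (Q : A -> Prop) (l : list A) : nat :=
  length (filter (fun x => if excluded_middle_informative (Q x) then true else false) l).

(* H union B is represented by list concatenation *)
Definition tp (H B : list clause) (Ep : list atom) : nat :=
  count_prop (fun e => entails (H ++ B) e) Ep.
Definition tn (H B : list clause) (En : list atom) : nat :=
  count_prop (fun e => ~ entails (H ++ B) e) En.
Definition fn (H B : list clause) (Ep : list atom) : nat := length Ep - tp H B Ep.
Definition fp (H B : list clause) (En : list atom) : nat := length En - tn H B En.
Definition S_ACC (H B : list clause) (Ep En : list atom) : nat :=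
  tp H B Ep + tn H B En.

End Syntax.

(* A generalization H3 of H1 is entailed by H1 (each clause of H1 is an instance of a
   clause of H3), so H3 entails every atom H1 does: it can only lose true negatives,
   and it gains at most the fn(H1) positives that H1 misses.  Hence
   S_ACC(H3) <= S_ACC(H1) + fn(H1) < S_ACC(H2). *)
From Stdlib Require Import List ZArith Lia ClassicalEpsilon.
Set Implicit Arguments.

Section Subsumption.
Variables (F P : Type).

Lemma teval_tsubst (I : interp F P) (g : nat -> dom I) (s : nat -> term F) :
  forall t, teval I g (tsubst s t) = teval I (fun v => teval I g (s v)) t.
Proof.
  fix IH 1. intros [v | f ts]; simpl; [reflexivity |].
  f_equal. rewrite map_map.
  induction ts as [| t ts IHts]; simpl; [reflexivity |].
  rewrite IH, IHts. reflexivity.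
Qed.

Lemma lit_true_lsubst (I : interp F P) (g : nat -> dom I) (s : nat -> term F) l :
  lit_true I (fun v => teval I g (s v)) l -> lit_true I g (lsubst s l).
Proof.
  assert (Hargs : forall a : atom F P,
    map (teval I g) (aargs (asubst s a)) = map (teval I (fun v => teval I g (s v))) (aargs a)).
  { intros a. simpl. rewrite map_map. apply map_ext, teval_tsubst. }
  destruct l as [a | a]; simpl; unfold atom_true; rewrite Hargs; auto.
Qed.

Lemma clause_valid_subsumes (I : interp F P) (c1 c2 : clause F P) :
  subsumes c1 c2 -> clause_valid I c1 -> clause_valid I c2.
Proof.
  intros [s Hs] Hc1 g.
  destruct (Hc1 (fun v => teval I g (s v))) as [l [Hl Htrue]].
  exists (lsubst s l). split; [apply Hs, Hl | apply lit_true_lsubst, Htrue].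
Qed.

Lemma is_model_theory_subsumes (I : interp F P) (T1 T2 : list (clause F P)) :
  theory_subsumes T1 T2 -> is_model I T1 -> is_model I T2.
Proof.
  intros Hsub Hm c2 Hc2. destruct (Hsub c2 Hc2) as [c1 [Hc1 Hs]].
  exact (clause_valid_subsumes Hs (Hm c1 Hc1)).
Qed.

Lemma entails_generalization (T1 T2 B : list (clause F P)) (a : atom F P) :
  generalization T1 T2 -> entails (T2 ++ B) a -> entails (T1 ++ B) a.
Proof.
  intros Hgen He I Hm. apply He. intros c Hc.
  apply in_app_or in Hc as [Hc | Hc].
  - apply (is_model_theory_subsumes Hgen); [| exact Hc].
    intros c' Hc'. apply Hm, in_or_app. left. exact Hc'.
  - apply Hm, in_or_app. right. exact Hc.
Qed.

End Subsumption.

Lemma count_prop_mono {A : Type} (Q R : A -> Prop) (l : list A) :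
  (forall x, Q x -> R x) -> count_prop Q l <= count_prop R l.
Proof.
  intros HQR. unfold count_prop. induction l as [| x l IH]; simpl; [lia |].
  destruct (excluded_middle_informative (Q x)), (excluded_middle_informative (R x));
    simpl; try lia.
  exfalso. auto.
Qed.

Lemma count_prop_le_length {A : Type} (Q : A -> Prop) (l : list A) :
  count_prop Q l <= length l.
Proof. apply filter_length_le. Qed.

Lemma tn_generalization {F P : Type} (H1 H3 B : list (clause F P)) (En : list (atom F P)) :
  generalization H3 H1 -> tn H3 B En <= tn H1 B En.
Proof.
  intros Hgen. apply count_prop_mono.
  intros e Hnot He. apply Hnot. exact (entails_generalization B Hgen He).
Qed.

Lemma S_ACC_generalization_le {F P : Type} (H1 H3 B : list (clause F P))
  (Ep En : list (atom F P)) :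
  generalization H3 H1 -> S_ACC H3 B Ep En <= S_ACC H1 B Ep En + fn H1 B Ep.
Proof.
  intros Hgen.
  pose proof (tn_generalization B En Hgen).
  pose proof (count_prop_le_length (fun e => entails (H3 ++ B) e) Ep).
  pose proof (count_prop_le_length (fun e => entails (H1 ++ B) e) Ep).
  unfold S_ACC, fn, tp in *. lia.
Qed.

Theorem proposition4p3 (F P : Type)
  (HS : list (clause F P) -> Prop)                       (* the hypothesis space H_{D,C} *)
  (HS_hyp : forall H, HS H -> hypothesis H)
  (B : list (clause F P)) (HB : horn_program B)
  (Ep En : list (atom F P))
  (Ep_set : NoDup Ep) (En_set : NoDup En)
  (Ep_ground : forall e, In e Ep -> ground_atom e)
  (En_ground : forall e, In e En -> ground_atom e)
  (H1 H2 H3 : list (clause F P))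
  (H1_in : HS H1) (H2_in : HS H2) (H3_in : HS H3)
  (Hgen : generalization H3 H1) :
  (Z.of_nat (S_ACC H2 B Ep En) - Z.of_nat (S_ACC H1 B Ep En)
     > Z.of_nat (fn H1 B Ep))%Z ->
  S_ACC H2 B Ep En > S_ACC H3 B Ep En.
Proof.
  intros Hgap.
  pose proof (S_ACC_generalization_le B Ep En Hgen).
  lia.
Qed.
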